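(* Let $w\in\mathbb R^n_{\ge0}$ and let $\eta$ be as defined below. Then: (i) $\eta$ is non-decreasing on $[0,n]$; (ii) $\eta(ah)\le 2a\,\eta(h)$ for all $a\ge1$ and $h\in[1,n/a]$; (iii) if $X\sim\mathrm{Bin}(m,p)$ is a binomial random variable with $1\le mp\le m\le n$, then $\mathbb E[\eta(X)]\le 3\,\eta(mp)$.
   Context: For $a\in[0,n]$, $\eta(a)$ is the expected value of $\max_{i\in R}w_i$, where $R$ is a uniformly random subset of $\{1,\dots,n\}$ of size $\lfloor a\rfloor$ (without repetition); by convention $\eta(a)=0$ for $a\in[0,1)$. *)

From mathcomp Require Import all_boot all_order all_algebra.
Set Implicit Arguments. Unset Strict Implicit. Unset Printing Implicit Defensive.
Import Order.TTheory GRing.Theory Num.Theory.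
Local Open Scope ring_scope.

(* eta_nat w k : expected value of max_{i in S} w_i where S is a uniformly
   random k-subset of {1..n} (here 'I_n).  The max over the empty set is 0,
   which is the convention eta = 0 on [0,1).  *)
Definition eta_nat (R : archiRealFieldType) (n : nat) (w : 'I_n -> R) (k : nat) : R :=
  (\sum_(S : {set 'I_n} | #|S| == k) \big[Num.max/0]_(i in S) w i) / ('C(n, k))%:R.

Definition eta (R : archiRealFieldType) (n : nat) (w : 'I_n -> R) (a : R) : R :=
  eta_nat w (Num.truncn a).

Definition binom_expect (R : archiRealFieldType) (m : nat) (p : R) (f : nat -> R) : R :=
  \sum_(k < m.+1) ('C(m, k))%:R * p ^+ k * (1 - p) ^+ (m - k) * f k.

From mathcomp Require Import all_boot all_order all_algebra.
From mathcomp Require Import zify ring lra.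
Set Implicit Arguments. Unset Strict Implicit. Unset Printing Implicit Defensive.
Import Order.TTheory GRing.Theory Num.Theory.

(* Write M(S) for the maximum of w over S and eta_nat k for the average of
   M(S) over the k-subsets S of 'I_n.  The whole lemma rests on averaging
   over a chain of sizes a <= c <= n: picking a random c-set T and then a
   random a-subset of T yields a uniform random a-set (double counting).
   For a fixed T of size c, the a-subsets S of T satisfy
     - M(S) <= M(T), so their average is at most M(T);
     - a fraction a/c of them contains an argmax of w on T, so their
       average is at least (a/c) M(T).
   Averaging over T gives eta_nat a <= eta_nat c and a eta_nat c <= c eta_nat a,
   hence k eta_nat j <= max(k, j) eta_nat k whenever k >= 1.  Part (i) is the
   first inequality composed with the floor function, part (ii) is the
   scaling bound with j = floor(a h), k = floor h, and part (iii) follows by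
   taking expectations of eta_nat X <= eta_nat k (1 + X / k) for
   k = floor(m p), using E[X] = m p < 2 k. *)

(* The c-supersets of an s-set in an n-set are counted by their complements. *)
Lemma card_supersets n (S : {set 'I_n}) c : #|S| <= c <= n ->
  #|[set T : {set 'I_n} | S \subset T & #|T| == c]| = 'C(n - #|S|, c - #|S|).
Proof.
move=> /andP[Sc cn].
rewrite -(card_imset _ (@setC_inj _)) (can_imset_pre _ (@setCK _)).
have -> : (@setC _) @^-1: [set T : {set 'I_n} | S \subset T & #|T| == c] =
    [set U : {set 'I_n} | U \subset ~: S & #|U| == n - c].
  apply/setP => U; rewrite !inE subsetC.
  have := cardsC U; rewrite card_ord => cardU.
  congr (_ && _); apply/eqP/eqP; lia.
rewrite cards_draws cardsCs setCK card_ord -bin_sub; last lia.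
congr 'C(_, _); lia.
Qed.

Local Open Scope ring_scope.

Lemma sum_nested_subsets (V : nmodType) n (F : {set 'I_n} -> V) a c :
  (a <= c <= n)%N ->
  \sum_(T : {set 'I_n} | #|T| == c)
     \sum_(S : {set 'I_n} | (S \subset T) && (#|S| == a)) F S
  = (\sum_(S : {set 'I_n} | #|S| == a) F S) *+ 'C(n - a, c - a).
Proof.
move=> ac.
rewrite (exchange_big_dep (fun S : {set 'I_n} => #|S| == a)) /=;
  last by move=> ? ? _ /andP[].
rewrite -sumrMnl; apply: eq_bigr => S /eqP Sa.
rewrite (eq_bigl [in [set T : {set 'I_n} | S \subset T & #|T| == c]]);
  last by move=> T; rewrite !inE Sa eqxx andbT andbC.
by rewrite sumr_const card_supersets Sa.
Qed.

(* The same double counting with F = 1. *)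
Lemma bin_mul_sub (a c n : nat) : (a <= c <= n)%N ->
  ('C(n - a, c - a) * 'C(n, a) = 'C(c, a) * 'C(n, c))%N.
Proof.
move=> ac; have := sum_nested_subsets (fun _ => 1%N) ac.
have card_sum (P : pred {set 'I_n}) :
    (\sum_(S | P S) 1%N)%R = #|[set S | P S]|.
  by rewrite cardsE sum1_card.
rewrite !card_sum (eq_bigr (fun _ => 'C(c, a))); last first.
  move=> T /eqP <-; rewrite card_sum -cards_draws.
  by apply: eq_card => S; rewrite !inE.
have mulrn_nat (x m : nat) : x *+ m = (x * m)%N by rewrite -mulr_natr natn.
rewrite sumr_const -cardsE !card_draws card_ord !mulrn_nat => ->.
exact: mulnC.
Qed.

Section MaxOverSubsets.
Variables (R : realDomainType) (n : nat) (w : 'I_n -> R).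
Hypothesis w_ge0 : forall i, 0 <= w i.

Definition wmax (S : {set 'I_n}) : R := \big[Num.max/0]_(i in S) w i.

Lemma wmax_ge0 (S : {set 'I_n}) : 0 <= wmax S.
Proof. by rewrite /wmax; elim/big_ind: _ => // x y x0 y0; rewrite le_max x0. Qed.

Lemma wmax_ge (S : {set 'I_n}) i : i \in S -> w i <= wmax S.
Proof. exact: le_bigmax_cond. Qed.

Lemma wmax_subset (S T : {set 'I_n}) : S \subset T -> wmax S <= wmax T.
Proof.
move=> ST; apply: bigmax_le => [|i iS]; first exact: wmax_ge0.
exact/wmax_ge/(subsetP ST).
Qed.

Lemma wmax_attained (T : {set 'I_n}) :
  T != set0 -> exists2 x, x \in T & wmax T = w x.
Proof.
case/set0Pn=> i0 iT.
have [x xT wx] := @eq_bigmax _ _ _ 0 _ (mem T) w iT (fun i _ => w_ge0 i).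
by exists x.
Qed.

Lemma sum_wmax_subsets_le (T : {set 'I_n}) a :
  \sum_(S : {set 'I_n} | (S \subset T) && (#|S| == a)) wmax S
    <= 'C(#|T|, a)%:R * wmax T.
Proof.
apply: le_trans (_ : \sum_(S : {set 'I_n} | (S \subset T) && (#|S| == a))
                       wmax T <= _).
  by apply: ler_sum => S /andP[ST _]; exact: wmax_subset.
by rewrite sumr_const -cards_draws mulr_natl cardsE.
Qed.

(* The 'C(#|T|-1, a-1) a-subsets of T containing an argmax x of w on T
   all have maximum M(T). *)
Lemma sum_wmax_subsets_ge (T : {set 'I_n}) a : (0 < a <= #|T|)%N ->
  'C(#|T|.-1, a.-1)%:R * wmax T
    <= \sum_(S : {set 'I_n} | (S \subset T) && (#|S| == a)) wmax S.
Proof.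
move=> /andP[a_gt0 aT].
have [x xT ->] : exists2 x, x \in T & wmax T = w x.
  by apply: wmax_attained; rewrite -card_gt0; lia.
rewrite (bigID (fun S : {set _} => x \in S)) /= -[leLHS]addr0.
apply: lerD; last by apply: sumr_ge0 => S _; exact: wmax_ge0.
set A := [set S : {set 'I_n} | S \subset T & #|S| == a].
have card_with_x : #|A :&: [set S : {set 'I_n} | x \in S]| = 'C(#|T|.-1, a.-1).
  have := cardsID [set S : {set 'I_n} | x \in S] A.
  have -> : A :\: [set S : {set 'I_n} | x \in S] =
      [set S : {set 'I_n} | S \subset T :\ x & #|S| == a].
    by apply/setP => S; rewrite !inE subsetD1; case: (S \subset T); case: (x \in S).
  rewrite !cards_draws (cardsD1 x T) xT add1n.
  by case: (a) a_gt0 => // a' _ /=; rewrite binS; lia.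
rewrite -card_with_x mulr_natl -sumr_const.
rewrite [leRHS](eq_bigl [in A :&: [set S : {set 'I_n} | x \in S]]);
  last by move=> S; rewrite !inE.
by apply: ler_sum => S; rewrite !inE => /andP[_ xS]; exact: wmax_ge.
Qed.

End MaxOverSubsets.

Section AverageOverSubsets.
Variables (R : archiRealFieldType) (n : nat) (w : 'I_n -> R).
Hypothesis w_ge0 : forall i, 0 <= w i.

Definition wmax_sum (k : nat) : R := \sum_(S : {set 'I_n} | #|S| == k) wmax w S.

Lemma wmax_sumE k : (k <= n)%N -> wmax_sum k = 'C(n, k)%:R * eta_nat w k.
Proof.
move=> kn; have -> : eta_nat w k = wmax_sum k / 'C(n, k)%:R by [].
by rewrite mulrC divfK // pnatr_eq0 -lt0n bin_gt0.
Qed.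

Lemma sum_nested_wmax a c : (a <= c <= n)%N ->
  \sum_(T : {set 'I_n} | #|T| == c)
     \sum_(S : {set 'I_n} | (S \subset T) && (#|S| == a)) wmax w S
  = ('C(c, a) * 'C(n, c))%:R * eta_nat w a.
Proof.
move=> ac; rewrite sum_nested_subsets // -[_ *+ _]mulr_natl.
change (\sum_(S : {set 'I_n} | #|S| == a) wmax w S) with (wmax_sum a).
by rewrite wmax_sumE ?mulrA -?natrM ?bin_mul_sub //; lia.
Qed.

Lemma eta_nat_ge0 k : 0 <= eta_nat w k.
Proof. by rewrite divr_ge0 // sumr_ge0 // => S _; exact: wmax_ge0. Qed.

Lemma eta_nat_mono a c : (a <= c <= n)%N -> eta_nat w a <= eta_nat w c.
Proof.
move=> ac.
have pos : 0 < ('C(c, a) * 'C(n, c))%:R :> R by rewrite ltr0n muln_gt0 !bin_gt0; lia.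
rewrite -(ler_pM2l pos) -sum_nested_wmax // natrM -mulrA -wmax_sumE; last lia.
rewrite /wmax_sum mulr_sumr; apply: ler_sum => T /eqP <-.
exact: sum_wmax_subsets_le.
Qed.

Lemma eta_nat_ratio a c : (0 < a)%N -> (a <= c <= n)%N ->
  a%:R * eta_nat w c <= c%:R * eta_nat w a.
Proof.
move=> a_gt0 ac.
have pos : 0 < ('C(c, a) * 'C(n, c))%:R :> R by rewrite ltr0n muln_gt0 !bin_gt0; lia.
have diag : (c * 'C(c.-1, a.-1) = a * 'C(c, a))%N by rewrite mul_bin_diag prednK.
have lower : ('C(c.-1, a.-1) * 'C(n, c))%:R * eta_nat w c
    <= ('C(c, a) * 'C(n, c))%:R * eta_nat w a.
  rewrite -sum_nested_wmax // natrM -mulrA -wmax_sumE; last lia.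
  rewrite /wmax_sum mulr_sumr; apply: ler_sum => T /eqP Tc.
  by rewrite -Tc; apply: (sum_wmax_subsets_ge w_ge0); rewrite Tc; lia.
rewrite -(ler_pM2l pos).
have -> : ('C(c, a) * 'C(n, c))%:R * (a%:R * eta_nat w c)
    = c%:R * (('C(c.-1, a.-1) * 'C(n, c))%:R * eta_nat w c) :> R.
  by rewrite !mulrA -!natrM mulnA diag mulnC mulnA.
by rewrite [leRHS]mulrCA; apply: ler_wpM2l.
Qed.

Lemma eta_nat_scaling k j : (0 < k <= n)%N -> (j <= n)%N ->
  k%:R * eta_nat w j <= (maxn k j)%:R * eta_nat w k.
Proof.
move=> kn jn; case: leqP => [kj | jk].
  by apply: eta_nat_ratio; lia.
rewrite ler_pM2l ?ltr0n; last lia.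
by apply: eta_nat_mono; lia.
Qed.

End AverageOverSubsets.

Section BinomialMoments.
Variables (R : comNzRingType) (p : R).

Lemma binom_mass_sum m :
  \sum_(k < m.+1) 'C(m, k)%:R * p ^+ k * (1 - p) ^+ (m - k) = 1.
Proof.
have := exprDn (1 - p) p m; rewrite subrK expr1n => binom; rewrite [RHS]binom.
by apply: eq_bigr => k _; ring.
Qed.

Lemma binom_mean m :
  \sum_(k < m.+1) 'C(m, k)%:R * p ^+ k * (1 - p) ^+ (m - k) * k%:R = m%:R * p.
Proof.
case: m => [|m]; first by rewrite big_ord_recl big_ord0 mulr0 addr0 mul0r.
rewrite big_ord_recl mulr0 add0r.
transitivity (m.+1%:R * p * \sum_(k < m.+1) 'C(m, k)%:R * p ^+ k * (1 - p) ^+ (m - k));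
  last by rewrite binom_mass_sum mulr1.
rewrite mulr_sumr; apply: eq_bigr => k _; rewrite /= /bump add1n subSS exprS.
have diag : 'C(m.+1, k.+1)%:R * k.+1%:R = m.+1%:R * 'C(m, k)%:R :> R.
  by rewrite -!natrM mulnC -mul_bin_diag.
transitivity (('C(m.+1, k.+1)%:R * k.+1%:R) * p * p ^+ k * (1 - p) ^+ (m - k));
  first ring.
by rewrite diag; ring.
Qed.

End BinomialMoments.

Lemma binom_expect_affine (R : archiRealFieldType) m (p x y : R) :
  binom_expect m p (fun k => x + y * k%:R) = x + y * (m%:R * p).
Proof.
transitivity (x * (\sum_(k < m.+1) 'C(m, k)%:R * p ^+ k * (1 - p) ^+ (m - k))
  + y * \sum_(k < m.+1) 'C(m, k)%:R * p ^+ k * (1 - p) ^+ (m - k) * k%:R);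
  last by rewrite binom_mass_sum binom_mean mulr1.
by rewrite !mulr_sumr -big_split; apply: eq_bigr => k _ /=; ring.
Qed.

Lemma binom_expect_le (R : archiRealFieldType) m (p : R) (f g : nat -> R) :
  0 <= p <= 1 -> (forall k, (k <= m)%N -> f k <= g k) ->
  binom_expect m p f <= binom_expect m p g.
Proof.
move=> /andP[p0 p1] fg; apply: ler_sum => k _; apply: ler_wpM2l.
  by rewrite !mulr_ge0 ?exprn_ge0 ?subr_ge0.
by apply: fg; rewrite -ltnS.
Qed.

Lemma truncn_le_bound (R : archiRealFieldType) n (x : R) :
  x <= n%:R -> (Num.truncn x <= n)%N.
Proof. by move=> xn; rewrite truncn_le_nat (le_lt_trans xn) // ltr_nat. Qed.

Section EtaOnReals.
Variables (R : archiRealFieldType) (n : nat) (w : 'I_n -> R).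
Hypothesis w_ge0 : forall i, 0 <= w i.

Lemma eta_nondecreasing a b :
  0 <= a -> a <= b -> b <= n%:R -> eta w a <= eta w b.
Proof.
move=> a0 ab bn; apply: eta_nat_mono => //.
by rewrite le_truncn //= truncn_le_bound.
Qed.

Lemma eta_doubling a h : 1 <= a -> 1 <= h -> h <= n%:R / a ->
  eta w (a * h) <= 2 * a * eta w h.
Proof.
move=> a1 h1 hn.
have a0 : 0 < a by apply: lt_le_trans a1.
have h0 : 0 <= h by apply: le_trans h1.
rewrite /eta; set k := Num.truncn h; set K := Num.truncn (a * h).
have k_pos : (0 < k)%N by rewrite truncn_ge_nat.
have K_le : K%:R <= a * h by rewrite truncn_le mulr_ge0 // ltW.
have h_lt : h < k%:R + 1 by rewrite natr1 -truncn_lt_nat.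
have Kn : (K <= n)%N by rewrite truncn_le_bound // mulrC -ler_pdivlMr.
have kn : (k <= n)%N.
  by rewrite (leq_trans (le_truncn (ler_peMl h0 a1))) // truncn_le_bound.
have maxn_le : (maxn k K)%:R <= 2 * a * k%:R.
  have k1 : 1 <= k%:R :> R by rewrite ler1n.
  by case: leqP => _; nra.
rewrite -(ler_pM2l (_ : 0 < k%:R)) ?ltr0n //.
apply: le_trans (eta_nat_scaling w_ge0 _ Kn) _; first by rewrite k_pos.
rewrite (_ : k%:R * _ = 2 * a * k%:R * eta_nat w k); last by ring.
by rewrite ler_wpM2r // eta_nat_ge0.
Qed.

(* Part (iii): with k = floor (m p), eta_nat j <= eta_nat k (1 + j / k) for
   every j, and E[X] = m p < 2 k. *)
Lemma binom_expect_eta m p : 0 <= p <= 1 -> 1 <= m%:R * p -> (m <= n)%N ->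
  binom_expect m p (fun j => eta w j%:R) <= 3 * eta w (m%:R * p).
Proof.
move=> p01 mp1 mn; rewrite /eta; set k := Num.truncn (m%:R * p).
have mp0 : 0 <= m%:R * p by apply: le_trans mp1.
have k_pos : (0 < k)%N by rewrite truncn_ge_nat.
have km : (k <= m)%N.
  by case/andP: p01 => p0 p1; rewrite truncn_le_bound // ler_piMr.
have mp_lt : m%:R * p < k%:R + 1 by rewrite natr1 -truncn_lt_nat.
have k_gt0 : 0 < k%:R :> R by rewrite ltr0n.
have k_neq0 : k%:R != 0 :> R by rewrite pnatr_eq0 -lt0n.
have e_ge0 := eta_nat_ge0 w_ge0 k; set e := eta_nat w k in e_ge0 *.
have pointwise j : (j <= m)%N -> eta_nat w j <= e + e / k%:R * j%:R.
  move=> jm; rewrite -(ler_pM2l k_gt0).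
  apply: le_trans (eta_nat_scaling w_ge0 _ (leq_trans jm mn)) _.
    by rewrite k_pos (leq_trans km mn).
  rewrite (_ : k%:R * _ = (k + j)%:R * e); last by rewrite natrD; field.
  by rewrite ler_wpM2r // ler_nat geq_max leq_addr leq_addl.
apply: le_trans (binom_expect_le (g := fun j => e + e / k%:R * j%:R) p01 _) _.
  by move=> j jm; rewrite natrK pointwise.
rewrite binom_expect_affine.
rewrite (_ : e + _ = (1 + m%:R * p / k%:R) * e); last by field.
have k1 : 1 <= k%:R :> R by rewrite ler1n.
have mean_le : m%:R * p / k%:R <= 2 by rewrite ler_pdivrMr //; lra.
by rewrite ler_wpM2r //; lra.
Qed.

End EtaOnReals.

Theorem lemma4p1 (R : archiRealFieldType) (n : nat) (w : 'I_n -> R)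
    (hw : forall i, 0 <= w i) :
  (forall a b : R, 0 <= a -> a <= b -> b <= n%:R -> eta w a <= eta w b) /\
  (forall a h : R, 1 <= a -> 1 <= h -> h <= n%:R / a ->
      eta w (a * h) <= 2 * a * eta w h) /\
  (forall (m : nat) (p : R), 0 <= p <= 1 -> 1 <= m%:R * p -> (m <= n)%N ->
      binom_expect m p (fun k => eta w k%:R) <= 3 * eta w (m%:R * p)).
Proof.
split; first exact: eta_nondecreasing.
split; first exact: eta_doubling.
exact: binom_expect_eta.
Qed.
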